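(* Let $G=(g_1,\dots,g_k)\in\mathbb{N}_0^k$ be telescopic with $g_1>0$, $c(G)=(c_2,\dots,c_k)$ and $\gcd(G)=d$, and suppose $g_n=c_mg_m$ for some $1<n<m\le k$. Then $g_n=z_nC_{n,k}$ where $z_n$ is a non-negative multiple of $d$ with $\gcd(z_n/d,c_n)=1$; moreover $\gcd(z_n/d,c_m)=1$, and $\gcd(c_j,c_m)=1$ for all $j$ with $n<j<m$.
   Context: $\langle\cdot\rangle$ denotes the set of $\mathbb{N}_0$-linear combinations. $G_i=(g_1,\dots,g_i)$, $d_i=\gcd(G_i)$, $c_j=d_{j-1}/d_j$; $G$ is telescopic if $c_jg_j\in\langle G_{j-1}\rangle$ for all $2\le j\le k$. $C_{a,b}=\prod_{j=a+1}^b c_j$, with the empty product equal to $1$. *)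

(* A sequence G = (g_1,...,g_k) is represented by
   g : nat -> nat together with its length k; only g 1, ..., g k matter. *)
From mathcomp Require Import all_boot.
Set Implicit Arguments. Unset Strict Implicit. Unset Printing Implicit Defensive.

Definition dd (g : nat -> nat) (i : nat) : nat :=
  \big[gcdn/0]_(1 <= j < i.+1) g j.

Definition cc (g : nat -> nat) (j : nat) : nat := dd g j.-1 %/ dd g j.

Definition CC (g : nat -> nat) (a b : nat) : nat :=
  \prod_(a.+1 <= j < b.+1) cc g j.

Definition in_semigroup (g : nat -> nat) (i x : nat) : Prop :=
  exists a : nat -> nat, x = \sum_(1 <= j < i.+1) a j * g j.

Definition telescopic (g : nat -> nat) (k : nat) : Prop :=
  forall j, 2 <= j <= k -> in_semigroup g j.-1 (cc g j * g j).

From mathcomp Require Import all_boot.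

(* Since d_j = gcd(d_(j-1), g_j), the quotient g_j/d_j is coprime to
   c_j = d_(j-1)/d_j.  Write g_n = x d_n; as d_n = C_(n,k) d_k, the witness is
   z = x d_k.  Writing g_m = h d_m, the equation g_n = c_m g_m together with
   d_n = C_(n,m-1) c_m d_m gives x C_(n,m-1) = h, so x and every c_j with
   n < j < m divide h, which is coprime to c_m. *)

Lemma coprime_divn_gcd a b :
  0 < gcdn a b -> coprime (a %/ gcdn a b) (b %/ gcdn a b).
Proof.
move=> gt0; rewrite /coprime -(eqn_pmul2r gt0) mul1n muln_gcdl.
by rewrite !divnK ?dvdn_gcdl ?dvdn_gcdr.
Qed.

Section Telescope.

Variable g : nat -> nat.

Lemma dd_S i : dd g i.+1 = gcdn (dd g i) (g i.+1).
Proof. by rewrite /dd big_nat_recr. Qed.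

Lemma dd_1 : dd g 1 = g 1.
Proof. by rewrite dd_S /dd big_geq // gcd0n. Qed.

Lemma dvdn_dd i : 0 < i -> dd g i %| g i.
Proof. by case: i => // i _; rewrite dd_S dvdn_gcdr. Qed.

Lemma mul_cc_dd b : cc g b.+1 * dd g b.+1 = dd g b.
Proof. by rewrite /cc /= divnK // dd_S dvdn_gcdl. Qed.

Lemma CC_recr a b : a <= b -> CC g a b.+1 = CC g a b * cc g b.+1.
Proof. by move=> le_ab; rewrite /CC big_nat_recr. Qed.

Lemma mul_CC_dd a b : a <= b -> CC g a b * dd g b = dd g a.
Proof.
elim: b => [|b IH]; first by rewrite leqn0 => /eqP ->; rewrite /CC big_geq // mul1n.
rewrite leq_eqVlt => /orP [/eqP ->|lt_ab]; first by rewrite /CC big_geq // mul1n.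
by rewrite CC_recr // -mulnA mul_cc_dd IH.
Qed.

Lemma dvdn_cc_CC a b j : a < j <= b -> cc g j %| CC g a b.
Proof.
move=> /andP [lt_aj le_jb]; rewrite /CC (bigD1_seq j) ?dvdn_mulr ?iota_uniq //.
by rewrite mem_index_iota lt_aj ltnS.
Qed.

Lemma dd_gt0 b : 0 < g 1 -> 0 < b -> 0 < dd g b.
Proof.
move=> g1_gt0 b_gt0; apply: (dvdn_gt0 g1_gt0).
by rewrite -dd_1 -(@mul_CC_dd 1 b b_gt0) dvdn_mull.
Qed.

Lemma coprime_cc_divn_dd j :
  0 < j -> 0 < dd g j -> coprime (cc g j) (g j %/ dd g j).
Proof.
by case: j => // j _; rewrite /cc /= dd_S; apply: coprime_divn_gcd.
Qed.

End Telescope.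

Theorem mainTheorem20 (g : nat -> nat) (k n m : nat) :
  telescopic g k -> 0 < g 1 ->
  1 < n -> n < m -> m <= k ->
  g n = cc g m * g m ->
  exists z : nat,
    [/\ g n = z * CC g n k,
        dd g k %| z,
        coprime (z %/ dd g k) (cc g n),
        coprime (z %/ dd g k) (cc g m)
      & forall j, n < j < m -> coprime (cc g j) (cc g m)].
Proof.
move=> _ g1_gt0 n_gt1 lt_nm le_mk gnE.
have dd_pos b : 0 < b -> 0 < dd g b by apply: dd_gt0.
have n_gt0 : 0 < n by apply: ltnW.
have k_gt0 : 0 < k by apply: leq_trans le_mk; apply: ltn_trans lt_nm.
set x := g n %/ dd g n.
have gn_x : g n = x * dd g n by rewrite divnK ?dvdn_dd.
case: m lt_nm le_mk gnE => // M lt_nM le_Mk gnE.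
have le_nM : n <= M by [].
set h := g M.+1 %/ dd g M.+1.
have cop_h : coprime (cc g M.+1) h by apply: coprime_cc_divn_dd; rewrite ?dd_pos.
have gm_h : g M.+1 = h * dd g M.+1 by rewrite divnK ?dvdn_dd.
have x_CC : x * CC g n M = h.
  apply/eqP; rewrite -(eqn_pmul2r (dd_pos M (leq_trans n_gt0 le_nM))).
  by rewrite -mulnA mul_CC_dd // -gn_x gnE gm_h -(mul_cc_dd _ M) mulnCA.
have cop_x : coprime x (cc g M.+1).
  by rewrite coprime_sym (coprime_dvdr _ cop_h) // -x_CC dvdn_mulr.
exists (x * dd g k); rewrite mulnK ?dd_pos //; split=> //.
- by rewrite -mulnA (mulnC (dd g k)) mul_CC_dd // (leq_trans le_nM) 1?ltnW.
- exact: dvdn_mull.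
- by rewrite coprime_sym coprime_cc_divn_dd ?dd_pos.
- move=> j /andP [lt_nj lt_jM].
  rewrite coprime_sym (coprime_dvdr _ cop_h) // -x_CC dvdn_mull // dvdn_cc_CC //.
  by rewrite lt_nj -ltnS.
Qed.
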